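(* Let $T$ be a set of three affinely independent points in $\mathbb{N}_0^2$. Then for every $\alpha\in T$ there exists a point $\beta\in E_1^\infty(T)\setminus\{\alpha\}$ such that $\beta-\alpha\in\mathbb{N}^2$ (both entries strictly positive).
   Context: $\mathbb{N}=\{1,2,\dots\}$, $\mathbb{N}_0=\{0,1,2,\dots\}$. For nonempty $\Gamma\subseteq\mathbb{N}_0^d$, $\Lambda(\Gamma)$ is the coset in $\mathbb{Z}^d$ generated by $\Gamma$ (smallest coset of a subgroup of $\mathbb{Z}^d$ containing $\Gamma$); each $\lambda\in\Lambda(\Gamma)$ can be written $\lambda=\gamma+\sum_{\alpha\in\Gamma,\alpha\neq\gamma}m_{\gamma,\alpha}(\alpha-\gamma)$ with $\gamma\in\Gamma$ and integers $m_{\gamma,\alpha}$, finitely many nonzero. $d(\Gamma,\lambda)$ is the infimum over all such representations of $\max\big(\sum_{m_{\gamma,\alpha}>0}m_{\gamma,\alpha},-\sum_{m_{\gamma,\alpha}<0}m_{\gamma,\alpha}\big)$, and $E_n(\Gamma)=\{\lambda\in\Lambda(\Gamma)\cap\mathbb{N}_0^d:d(\Gamma,\lambda)\leq n\}$. Set $E_n^1(T)=E_n(T)$, $E_n^{k+1}(T)=E_n(E_n^k(T))$, and $E_n^\infty(T)=\bigcup_{k\geq1}E_n^k(T)$. *)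

From HB Require Import structures.
From mathcomp Require Import all_boot all_order all_algebra.
Set Implicit Arguments. Unset Strict Implicit. Unset Printing Implicit Defensive.
Import Order.TTheory GRing.Theory Num.Theory.
Local Open Scope ring_scope.

Definition pt (d : nat) := 'rV[int]_d.
Definition ptset (d : nat) := pt d -> Prop.

Definition in_N0 d (v : pt d) : Prop := forall i : 'I_d, 0 <= v ord0 i.
Definition in_N d (v : pt d) : Prop := forall i : 'I_d, 0 < v ord0 i.

Definition is_subgroup d (H : ptset d) : Prop :=
  H 0 /\ forall x y, H x -> H y -> H (x - y).
Definition is_coset d (C : ptset d) : Prop :=
  exists (c : pt d) (H : ptset d), is_subgroup H /\ forall x, C x <-> H (x - c).

Definition Lambda d (G : ptset d) : ptset d :=
  fun l => forall C : ptset d, is_coset C -> (forall x, G x -> C x) -> C l.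

(* A representation l = g + sum_{alpha in G, alpha <> g} m_alpha (alpha - g),
   finitely supported coefficients given as a list of (alpha, m_alpha)
   with distinct alphas. *)
Definition is_rep d (G : ptset d) (l : pt d) (g : pt d) (s : seq (pt d * int)) : Prop :=
  G g /\ uniq (map fst s) /\ (forall p, p \in s -> G p.1 /\ p.1 <> g) /\
  l = g + \sum_(p <- s) (p.1 - g) *~ p.2.

Definition cost_pos d (s : seq (pt d * int)) : int := \sum_(p <- s) Num.max 0 p.2.
Definition cost_neg d (s : seq (pt d * int)) : int := \sum_(p <- s) Num.max 0 (- p.2).

(* d(Gamma, l) <= n : the infimum (over naturals, hence attained) is <= n *)
Definition dist_le d (G : ptset d) (l : pt d) (n : nat) : Prop :=
  exists g s, is_rep G l g s /\ cost_pos s <= n%:Z /\ cost_neg s <= n%:Z.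

Definition E d (n : nat) (G : ptset d) : ptset d :=
  fun l => Lambda G l /\ in_N0 l /\ dist_le G l n.

Definition Eiter d (n k : nat) (T : ptset d) : ptset d := iter k (E n) T.
Definition Einf d (n : nat) (T : ptset d) : ptset d :=
  fun l => exists k, (1 <= k)%N /\ Eiter n k T l.

(* affine independence of three points: the only integer (equivalently
   rational) affine relation is trivial *)
Definition aff_indep3 d (a b c : pt d) : Prop :=
  forall l1 l2 l3 : int, l1 + l2 + l3 = 0 ->
    a *~ l1 + b *~ l2 + c *~ l3 = 0 -> l1 = 0 /\ l2 = 0 /\ l3 = 0.

(* With base point x, the representation x + y - z = x + 1 (y - x) - 1 (z - x)
   has cost 1, so E_1^oo(T) is closed under (x, y, z) |-> x + y - z as long as
   the result stays in N_0^2.  Measured from alpha, the displacements u of such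
   a set are closed under u + v and u - v above the floor -alpha.  The other two
   points of T give independent displacements u, v.  A Euclid-like descent on
   |u|_1 + |v|_1 either shrinks the pair or produces a displacement w <> 0 with
   coordinates of one sign, which may be taken >= 0 since -w stays above the
   floor; then n w +- v, for n large, has both coordinates positive. *)

From mathcomp Require Import all_boot all_order all_algebra.
From mathcomp Require Import zify.
Import Order.TTheory GRing.Theory Num.Theory.
Set Implicit Arguments. Unset Strict Implicit.
Local Open Scope ring_scope.

Definition comb_closed d (P : ptset d) : Prop :=
  forall x y z, P x -> P y -> P z -> in_N0 (x + y - z) -> P (x + y - z).

Section Combinations.

Variables (d n : nat) (G : ptset d).

Lemma coset_comb (C : ptset d) x y z :
  is_coset C -> C x -> C y -> C z -> C (x + y - z).
Proof.
case=> c [H [[_ H_sub] C_H]] /C_H Hx /C_H Hy /C_H Hz; apply/C_H.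
have -> : x + y - z - c = (x - c) - ((z - c) - (y - c)).
  by rewrite !opprB subrKA addrAC addrA [x - c + y]addrAC.
exact: H_sub Hx (H_sub _ _ Hz Hy).
Qed.

Lemma Lambda_comb x y z : G x -> G y -> G z -> Lambda G (x + y - z).
Proof. by move=> Gx Gy Gz C /coset_comb C_comb GC; apply: C_comb; apply: GC. Qed.

Lemma dist_le_mem x : G x -> dist_le G x n.
Proof.
move=> Gx; exists x, [::]; rewrite /cost_pos /cost_neg !big_nil.
by do !split => //; rewrite big_nil addr0.
Qed.

Lemma dist_le_comb x y z : (0 < n)%N -> G x -> G y -> G z -> dist_le G (x + y - z) n.
Proof.
move=> n_gt0 Gx Gy Gz.
(* x + y - z = x + (y - x) - (z - x); coincidences among x, y, z shorten it. *)
have [<-|neq_xz] := eqVneq x z; first by rewrite addrC addKr; exact: dist_le_mem.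
have [<-|neq_yz] := eqVneq y z; first by rewrite addrK; exact: dist_le_mem.
have [<-|neq_xy] := eqVneq x y.
  have rep : is_rep G (x + x - z) x [:: (z, -1)].
    split => //; split => //; split.
      by move=> p; rewrite inE => /eqP -> /=; split => //; apply/eqP; rewrite eq_sym.
    by rewrite big_cons big_nil addr0 mulrN1z opprB addrA.
  exists x, [:: (z, -1)]; rewrite /cost_pos /cost_neg !big_cons !big_nil /=.
  by split => //; split; lia.
have rep : is_rep G (x + y - z) x [:: (y, 1); (z, -1)].
  split => //; split; [|split].
  - by rewrite /= inE neq_yz.
  - move=> p; rewrite !inE => /orP[] /eqP -> /=; split => //; apply/eqP;
      by rewrite eq_sym.
  - by rewrite !big_cons big_nil addr0 mulr1z mulrN1z opprB subrKA addrA.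
exists x, [:: (y, 1); (z, -1)]; rewrite /cost_pos /cost_neg !big_cons !big_nil /=.
by split => //; split; lia.
Qed.

Lemma mem_E x : (forall y, G y -> in_N0 y) -> G x -> E n G x.
Proof.
move=> G_N0 Gx; split; first by move=> C _ GC; apply: GC.
by split; [apply: G_N0 | apply: dist_le_mem].
Qed.

Lemma E_comb x y z : (0 < n)%N -> G x -> G y -> G z -> in_N0 (x + y - z) ->
  E n G (x + y - z).
Proof.
move=> n_gt0 Gx Gy Gz N0_xyz; split; first exact: Lambda_comb.
by split; last exact: dist_le_comb.
Qed.

End Combinations.

Section Iterates.

Variables (d n : nat) (T : ptset d).
Hypothesis T_N0 : forall x, T x -> in_N0 x.

Lemma Eiter_N0 k x : Eiter n k T x -> in_N0 x.
Proof. by case: k => [|k]; [apply: T_N0 | case=> _ []]. Qed.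

Lemma Eiter_mono i j x : (i <= j)%N -> Eiter n i T x -> Eiter n j T x.
Proof.
move/subnK <-; elim: (j - i)%N => [//|k IHk] /IHk Hx.
exact: mem_E (@Eiter_N0 _) Hx.
Qed.

Lemma mem_Einf x : T x -> Einf n T x.
Proof. by exists 1%N; split => //; apply: mem_E. Qed.

Lemma Einf_N0 x : Einf n T x -> in_N0 x.
Proof. by case=> k [_]; apply: Eiter_N0. Qed.

Lemma Einf_comb_closed : (0 < n)%N -> comb_closed (Einf n T).
Proof.
move=> n_gt0 x y z [i [_ Hx]] [j [_ Hy]] [k [_ Hz]] N0_xyz.
pose m := maxn i (maxn j k).
exists m.+1; split => //; apply: E_comb => //.
- by apply: Eiter_mono Hx; rewrite leq_max leqnn.
- by apply: Eiter_mono Hy; rewrite !leq_max leqnn orbT.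
- by apply: Eiter_mono Hz; rewrite !leq_max leqnn !orbT.
Qed.

End Iterates.

Section PlanarDescent.

Variable S : int -> int -> Prop.
Hypothesis S_ge0 : forall x y, S x y -> 0 <= x /\ 0 <= y.
Hypothesis S_comb : forall x1 y1 x2 y2 x3 y3, S x1 y1 -> S x2 y2 -> S x3 y3 ->
  0 <= x1 + x2 - x3 -> 0 <= y1 + y2 - y3 -> S (x1 + x2 - x3) (y1 + y2 - y3).
Variables a1 a2 : int.
Hypothesis S_a : S a1 a2.

Let disp u1 u2 := S (a1 + u1) (a2 + u2).

Let pos_disp := exists x1 x2, disp x1 x2 /\ 0 < x1 /\ 0 < x2.

Lemma disp_ge u1 u2 : disp u1 u2 -> 0 <= a1 + u1 /\ 0 <= a2 + u2.
Proof. exact: S_ge0. Qed.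

Lemma disp0 : disp 0 0.
Proof. by rewrite /disp !addr0. Qed.

Lemma disp_comb u1 u2 v1 v2 w1 w2 : disp u1 u2 -> disp v1 v2 -> disp w1 w2 ->
  0 <= a1 + (u1 + v1 - w1) -> 0 <= a2 + (u2 + v2 - w2) ->
  disp (u1 + v1 - w1) (u2 + v2 - w2).
Proof.
rewrite /disp => Du Dv Dw h1 h2.
have -> : a1 + (u1 + v1 - w1) = a1 + u1 + (a1 + v1) - (a1 + w1) by lia.
have -> : a2 + (u2 + v2 - w2) = a2 + u2 + (a2 + v2) - (a2 + w2) by lia.
by apply: S_comb => //; lia.
Qed.

Lemma disp_add u1 u2 v1 v2 : disp u1 u2 -> disp v1 v2 ->
  0 <= a1 + (u1 + v1) -> 0 <= a2 + (u2 + v2) -> disp (u1 + v1) (u2 + v2).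
Proof. by move=> Du Dv; have := disp_comb Du Dv disp0; rewrite !subr0. Qed.

Lemma disp_sub u1 u2 v1 v2 : disp u1 u2 -> disp v1 v2 ->
  0 <= a1 + (u1 - v1) -> 0 <= a2 + (u2 - v2) -> disp (u1 - v1) (u2 - v2).
Proof. by move=> Du Dv; have := disp_comb Du disp0 Dv; rewrite !addr0. Qed.

Lemma disp_mulrn u1 u2 (n : nat) : 0 <= u1 -> 0 <= u2 -> disp u1 u2 ->
  disp (n%:Z * u1) (n%:Z * u2).
Proof.
move=> u1_ge0 u2_ge0 Du; have [a1_ge0 a2_ge0] := S_ge0 S_a.
elim: n => [|n IHn]; first by rewrite !mul0r; exact: disp0.
have -> : n.+1%:Z * u1 = n%:Z * u1 + u1 by lia.
have -> : n.+1%:Z * u2 = n%:Z * u2 + u2 by lia.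
by apply: disp_add => //; nia.
Qed.

Lemma pos_disp_of_nonneg w1 w2 v1 v2 : disp w1 w2 -> disp v1 v2 -> 0 <= w1 -> 0 <= w2 ->
  w1 * v2 - w2 * v1 != 0 -> pos_disp.
Proof.
move=> Dw Dv w1_ge0 w2_ge0 det; have [Fv1 Fv2] := disp_ge Dv.
have [a1_ge0 a2_ge0] := S_ge0 S_a.
pose n := (`|v1| + `|v2|).+1.
have n_gt : `|v1|%:Z < n%:Z /\ `|v2|%:Z < n%:Z by rewrite /n; lia.
have Dnw := disp_mulrn n w1_ge0 w2_ge0 Dw.
have [w1_gt0|w1_0] : 0 < w1 \/ w1 = 0 by lia.
  have [w2_gt0|w2_0] : 0 < w2 \/ w2 = 0 by lia.
    by exists w1, w2.
  have [v2_gt0|v2_lt0] : 0 < v2 \/ v2 < 0 by move: det; rewrite w2_0; lia.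
    exists (n%:Z * w1 + v1), (n%:Z * w2 + v2); rewrite w2_0 in Dnw *.
    by split; [apply: disp_add Dnw Dv _ _|]; nia.
  exists (n%:Z * w1 - v1), (n%:Z * w2 - v2); rewrite w2_0 in Dnw *.
  by split; [apply: disp_sub Dnw Dv _ _|]; nia.
have w2_gt0 : 0 < w2 by move: det; rewrite w1_0; lia.
have [v1_gt0|v1_lt0] : 0 < v1 \/ v1 < 0 by move: det; rewrite w1_0; lia.
  exists (n%:Z * w1 + v1), (n%:Z * w2 + v2); rewrite w1_0 in Dnw *.
  by split; [apply: disp_add Dnw Dv _ _|]; nia.
exists (n%:Z * w1 - v1), (n%:Z * w2 - v2); rewrite w1_0 in Dnw *.
by split; [apply: disp_sub Dnw Dv _ _|]; nia.
Qed.

Lemma pos_disp_of_unmixed w1 w2 v1 v2 : disp w1 w2 -> disp v1 v2 -> 0 <= w1 * w2 ->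
  w1 * v2 - w2 * v1 != 0 -> pos_disp.
Proof.
move=> Dw Dv w_unmixed det; have [Fw1 Fw2] := disp_ge Dw.
have [[w1_ge0 w2_ge0]|[w1_le0 w2_le0]] : (0 <= w1 /\ 0 <= w2) \/ (w1 <= 0 /\ w2 <= 0)
  by nia.
  exact: pos_disp_of_nonneg Dw Dv w1_ge0 w2_ge0 det.
have [a1_ge0 a2_ge0] := S_ge0 S_a.
have Dw' : disp (0 - w1) (0 - w2) by apply: disp_sub disp0 Dw _ _; lia.
by apply: pos_disp_of_nonneg Dw' Dv _ _ _; lia.
Qed.

Lemma pos_disp_of_indep u1 u2 v1 v2 : disp u1 u2 -> disp v1 v2 ->
  u1 * v2 - u2 * v1 != 0 -> pos_disp.
Proof.
have [m] := ubnP (`|u1| + `|u2| + `|v1| + `|v2|)%N.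
elim: m => // m IH in u1 u2 v1 v2 *; move=> lt_m Du Dv det.
have [Fu1 Fu2] := disp_ge Du; have [Fv1 Fv2] := disp_ge Dv.
have [a1_ge0 a2_ge0] := S_ge0 S_a.
have [u_unmixed|u_mixed] : 0 <= u1 * u2 \/ u1 * u2 < 0 by lia.
  exact: pos_disp_of_unmixed Du Dv u_unmixed det.
have [v_unmixed|v_mixed] : 0 <= v1 * v2 \/ v1 * v2 < 0 by lia.
  by apply: pos_disp_of_unmixed Dv Du v_unmixed _; lia.
(* u and v in opposite open quadrants: u + v stays above the floor and, if
   mixed, is shorter than whichever of u, v shares its quadrant. *)
have [opposite|alike] : u1 * v1 < 0 \/ 0 < u1 * v1 by nia.
  have Ds : disp (u1 + v1) (u2 + v2) by apply: disp_add Du Dv _ _; nia.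
  have [s_unmixed|s_mixed] : 0 <= (u1 + v1) * (u2 + v2) \/ (u1 + v1) * (u2 + v2) < 0
    by lia.
    by apply: pos_disp_of_unmixed Ds Dv s_unmixed _; lia.
  have [shorter_u|shorter_v] : (absz (u1 + v1)%R + absz (u2 + v2)%R < `|u1| + `|u2|)%N \/
                               (absz (u1 + v1)%R + absz (u2 + v2)%R < `|v1| + `|v2|)%N by nia.
    by apply: IH Ds Dv _; lia.
  by apply: IH Du Ds _; lia.
(* u and v in the same open quadrant, u smaller on the positive coordinate:
   v - u stays above the floor and, if mixed, is shorter than v. *)
wlog dominated : u1 u2 v1 v2 lt_m Du Dv det Fu1 Fu2 Fv1 Fv2 u_mixed v_mixed alike /
  (0 < u1 /\ u1 <= v1) \/ (0 < u2 /\ u2 <= v2).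
  move=> wlog_dominated.
  have [|] : ((0 < u1 /\ u1 <= v1) \/ (0 < u2 /\ u2 <= v2)) \/
            ((0 < v1 /\ v1 <= u1) \/ (0 < v2 /\ v2 <= u2)) by nia.
    exact: wlog_dominated.
  by move=> dominated; apply: (wlog_dominated v1 v2 u1 u2) => //; lia.
have Ds : disp (v1 - u1) (v2 - u2) by apply: disp_sub Dv Du _ _; nia.
have [s_unmixed|s_mixed] : 0 <= (v1 - u1) * (v2 - u2) \/ (v1 - u1) * (v2 - u2) < 0
  by lia.
  by apply: pos_disp_of_unmixed Ds Du s_unmixed _; lia.
by apply: IH Du Ds _; nia.
Qed.

Lemma planar_dominating p1 p2 q1 q2 : S p1 p2 -> S q1 q2 ->
  (p1 - a1) * (q2 - a2) - (p2 - a2) * (q1 - a1) != 0 ->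
  exists x y, S x y /\ a1 < x /\ a2 < y.
Proof.
move=> Sp Sq det.
have Dp : disp (p1 - a1) (p2 - a2) by rewrite /disp !(addrC a1, addrC a2) !subrK.
have Dq : disp (q1 - a1) (q2 - a2) by rewrite /disp !(addrC a1, addrC a2) !subrK.
have [w1 [w2 [Dw [w1_gt0 w2_gt0]]]] := pos_disp_of_indep Dp Dq det.
by exists (a1 + w1), (a2 + w2); split => //; lia.
Qed.

End PlanarDescent.

Lemma forall_ord2 (Q : 'I_2 -> Prop) : Q ord0 -> Q ord_max -> forall i, Q i.
Proof.
move=> Q0 Q1 [[|[|//]] lt_i2].
- by rewrite (_ : Ordinal lt_i2 = ord0) //; apply: val_inj.
- by rewrite (_ : Ordinal lt_i2 = ord_max) //; apply: val_inj.
Qed.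

Lemma pt2P (u v : pt 2) :
  u ord0 ord0 = v ord0 ord0 -> u ord0 ord_max = v ord0 ord_max -> u = v.
Proof. by move=> eq0 eq1; apply/rowP; apply: forall_ord2. Qed.

Definition coords (P : ptset 2) (x y : int) : Prop :=
  exists b, P b /\ b ord0 ord0 = x /\ b ord0 ord_max = y.

Definition cross (u v : pt 2) : int :=
  u ord0 ord0 * v ord0 ord_max - u ord0 ord_max * v ord0 ord0.

Section Coordinates.

Variable P : ptset 2.
Hypothesis P_N0 : forall b, P b -> in_N0 b.
Hypothesis P_comb : comb_closed P.

Lemma coords_mem b : P b -> coords P (b ord0 ord0) (b ord0 ord_max).
Proof. by exists b. Qed.

Lemma coords_ge0 x y : coords P x y -> 0 <= x /\ 0 <= y.
Proof. by case=> b [/P_N0 b_N0 [<- <-]]. Qed.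

Lemma coords_comb x1 y1 x2 y2 x3 y3 :
  coords P x1 y1 -> coords P x2 y2 -> coords P x3 y3 ->
  0 <= x1 + x2 - x3 -> 0 <= y1 + y2 - y3 -> coords P (x1 + x2 - x3) (y1 + y2 - y3).
Proof.
move=> [b1 [P1 [<- <-]]] [b2 [P2 [<- <-]]] [b3 [P3 [<- <-]]] ge0_x ge0_y.
exists (b1 + b2 - b3); rewrite !mxE; split => //.
by apply: P_comb => //; apply: forall_ord2; rewrite !mxE.
Qed.

Theorem comb_closed_dominating alpha p q : P alpha -> P p -> P q ->
  cross (p - alpha) (q - alpha) != 0 ->
  exists2 beta, P beta & in_N (beta - alpha).
Proof.
move=> Palpha Pp Pq; rewrite /cross !mxE => det.
have [x [y [[b [Pb [b_x b_y]]] [lt_x lt_y]]]] :=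
  planar_dominating coords_ge0 coords_comb (coords_mem Palpha)
    (coords_mem Pp) (coords_mem Pq) det.
by exists b => //; apply: forall_ord2; rewrite !mxE subr_gt0 ?b_x ?b_y.
Qed.

End Coordinates.

Lemma pt_mulrzE d (u : pt d) (l : int) i : (u *~ l) ord0 i = u ord0 i * l.
Proof. by rewrite -scaler_int mxE intz mulrC. Qed.

Lemma aff_indep3_swap12 d (a b c : pt d) : aff_indep3 a b c -> aff_indep3 b a c.
Proof.
move=> indep l1 l2 l3 sum0 rel0.
have := indep l2 l1 l3; rewrite (addrC l2) (addrC (a *~ l2)).
by move=> /(_ sum0 rel0) [-> [-> ->]].
Qed.

Lemma aff_indep3_swap23 d (a b c : pt d) : aff_indep3 a b c -> aff_indep3 a c b.
Proof.
move=> indep l1 l2 l3 sum0 rel0.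
have := indep l1 l3 l2; rewrite addrAC [a *~ l1 + _ + _]addrAC.
by move=> /(_ sum0 rel0) [-> [-> ->]].
Qed.

Lemma aff_indep3_cross (a b c : pt 2) : aff_indep3 a b c -> cross (b - a) (c - a) != 0.
Proof.
(* A vanishing cross product of u = b - a and v = c - a makes (v2, -u2) and
   (v1, -u1) linear relations, so u = v = 0, and then (1, 0) is one too. *)
move=> indep; apply/eqP; rewrite /cross !mxE /= => cross0.
have lin x y : (b - a) *~ x + (c - a) *~ y = 0 -> x = 0 /\ y = 0.
  move/rowP => rel; have [||_ //] := indep (- x - y) x y; first lia.
  by apply/rowP => j; move: (rel j); rewrite !(mxE, pt_mulrzE) /=; lia.
have [|c2_a2 a2_b2] := lin (c ord0 ord_max - a ord0 ord_max) (a ord0 ord_max - b ord0 ord_max).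
  by apply: pt2P; rewrite !(mxE, pt_mulrzE) /=; lia.
have [|c1_a1 a1_b1] := lin (c ord0 ord0 - a ord0 ord0) (a ord0 ord0 - b ord0 ord0).
  by apply: pt2P; rewrite !(mxE, pt_mulrzE) /=; lia.
have [|] // := lin 1 0.
by apply: pt2P; rewrite !(mxE, pt_mulrzE) /=; lia.
Qed.

Theorem lemma3p6 (a b c : pt 2) :
  in_N0 a -> in_N0 b -> in_N0 c -> aff_indep3 a b c ->
  let T : ptset 2 := fun x => x = a \/ x = b \/ x = c in
  forall alpha : pt 2, T alpha ->
    exists beta : pt 2, Einf 1 T beta /\ beta <> alpha /\ in_N (beta - alpha).
Proof.
move=> Na Nb Nc indep T alpha Talpha.
have T_N0 x : T x -> in_N0 x by case=> [->|[->|->]].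
have dominating := comb_closed_dominating (@Einf_N0 _ 1 _ T_N0)
  (@Einf_comb_closed _ 1 _ T_N0 isT).
have [Ea Eb Ec] : [/\ Einf 1 T a, Einf 1 T b & Einf 1 T c].
  by split; apply: (@mem_Einf _ 1 _ T_N0); rewrite /T; tauto.
suff [beta Ebeta beta_gt] : exists2 beta, Einf 1 T beta & in_N (beta - alpha).
  exists beta; split => //; split => // beta_eq.
  by move: (beta_gt ord0); rewrite beta_eq subrr mxE ltxx.
case: Talpha => [->|[->|->]].
- exact: dominating Ea Eb Ec (aff_indep3_cross indep).
- exact: dominating Eb Ea Ec (aff_indep3_cross (aff_indep3_swap12 indep)).
- apply: dominating Ec Ea Eb (aff_indep3_cross _).
  exact/aff_indep3_swap12/aff_indep3_swap23.
Qed.
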